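(* Let $k\ge 1$ and let $\Delta^+=\{(\vec x,\vec y)\in\mathbb R^k\times\mathbb R^k:\ x_i<y_i \text{ for all } i=1,\dots,k\}$. Call a pair $(\vec l,\vec b)\in\mathbb R^k\times\mathbb R^k$ admissible if $\vec l=(l_1,\dots,l_k)$ is a unit vector (Euclidean norm $1$) with $l_i>0$ for every $i$, and $\vec b=(b_1,\dots,b_k)$ satisfies $\sum_{i=1}^k b_i=0$. For an admissible pair let $\pi_{(\vec l,\vec b)}=\{(s\vec l+\vec b,\ t\vec l+\vec b): s,t\in\mathbb R,\ s<t\}\subseteq\mathbb R^k\times\mathbb R^k$. Then for every $(\vec x,\vec y)\in\Delta^+$ there exists one and only one admissible pair $(\vec l,\vec b)$ such that $(\vec x,\vec y)\in\pi_{(\vec l,\vec b)}$. *)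

From HB Require Import structures.
From mathcomp Require Import all_boot all_order all_algebra.
From mathcomp Require Import reals.
Set Implicit Arguments. Unset Strict Implicit. Unset Printing Implicit Defensive.
Import Order.TTheory GRing.Theory Num.Theory.
Local Open Scope ring_scope.

Definition in_Delta_plus (R : realType) (k : nat) (x y : 'rV[R]_k) : Prop :=
  forall i : 'I_k, x 0 i < y 0 i.

Definition enorm (R : realType) (k : nat) (v : 'rV[R]_k) : R :=
  Num.sqrt (\sum_(i < k) v 0 i ^+ 2).

Definition admissible (R : realType) (k : nat) (l b : 'rV[R]_k) : Prop :=
  enorm l = 1 /\ (forall i : 'I_k, 0 < l 0 i) /\ \sum_(i < k) b 0 i = 0.

Definition in_pi (R : realType) (k : nat) (l b x y : 'rV[R]_k) : Prop :=
  exists s t : R, s < t /\ x = s *: l + b /\ y = t *: l + b.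

From HB Require Import structures.
From mathcomp Require Import all_boot all_order all_algebra.
From mathcomp Require Import reals.
Import Order.TTheory GRing.Theory Num.Theory.
Local Open Scope ring_scope.

(* Along the line s l + b the difference y - x is a positive multiple of l, so a
   unit l must be the normalized direction of y - x; and since the coordinates
   of l have positive sum, the hyperplane of zero coordinate sum meets each such
   line exactly once, which determines b. *)

Section Lines.
Context {R : realType} {k : nat}.
Hypothesis k_gt0 : (0 < k)%N.
Implicit Types (x y l b : 'rV[R]_k).

Lemma sumr_ord_gt0 {F : 'I_k -> R} : (forall i, 0 < F i) -> 0 < \sum_(i < k) F i.
Proof.
case: k k_gt0 F => // n _ F F_gt0.
by rewrite big_ord_recl ltr_pwDl // sumr_ge0 // => i _; apply: ltW.
Qed.

Lemma sum_coordDZ s l b :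
  \sum_(i < k) (s *: l + b) 0 i = s * \sum_(i < k) l 0 i + \sum_(i < k) b 0 i.
Proof. by rewrite mulr_sumr -big_split; apply: eq_bigr => i _; rewrite !mxE. Qed.

Lemma enormZ c l : enorm (c *: l) = `|c| * enorm l.
Proof.
rewrite /enorm -sqrtr_sqr -sqrtrM ?sqr_ge0 // mulr_sumr.
by congr Num.sqrt; apply: eq_bigr => i _; rewrite mxE exprMn.
Qed.

Lemma enorm_gt0 l : (forall i, 0 < l 0 i) -> 0 < enorm l.
Proof. by move=> l_gt0; rewrite sqrtr_gt0 sumr_ord_gt0 // => i; rewrite exprn_gt0. Qed.

Definition direction x y := (enorm (y - x))^-1 *: (y - x).

Definition proj_sum0 x l := x - ((\sum_(i < k) x 0 i) / \sum_(i < k) l 0 i) *: l.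

Lemma unit_direction l x y c :
  enorm l = 1 -> 0 < c -> y - x = c *: l -> l = direction x y.
Proof.
move=> l1 c_gt0 dxy; rewrite /direction dxy enormZ l1 mulr1 gtr0_norm //.
by rewrite scalerA mulVf ?scale1r // gt_eqF.
Qed.

Lemma proj_sum0_line s l b :
  \sum_(i < k) l 0 i != 0 -> \sum_(i < k) b 0 i = 0 -> proj_sum0 (s *: l + b) l = b.
Proof.
by move=> sl_neq0 sb0; rewrite /proj_sum0 sum_coordDZ sb0 addr0 mulfK // addrAC subrr add0r.
Qed.

Lemma sum_proj_sum0 x l :
  \sum_(i < k) l 0 i != 0 -> \sum_(i < k) proj_sum0 x l 0 i = 0.
Proof.
by move=> sl_neq0; rewrite /proj_sum0 -scaleNr addrC sum_coordDZ mulNr mulfVK // addNr.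
Qed.

Lemma in_pi_translate l x y s c : 0 < c -> y - x = c *: l -> in_pi l (x - s *: l) x y.
Proof.
move=> c_gt0 dxy; exists s, (s + c); split; first by rewrite ltrDl.
split; first by rewrite addrC subrK.
by rewrite -[y](subrK x) dxy scalerDl (addrC (s *: l)) -addrA [s *: l + _]addrC subrK.
Qed.

Lemma line_subr s t l b : (t *: l + b) - (s *: l + b) = (t - s) *: l.
Proof. by rewrite opprD addrACA subrr addr0 scalerBl. Qed.

Section DeltaPlus.
Context {x y : 'rV[R]_k}.
Hypothesis xy : in_Delta_plus x y.

Lemma Delta_plus_subr_gt0 i : 0 < (y - x) 0 i.
Proof. by rewrite !mxE subr_gt0. Qed.

Lemma Delta_plus_enorm_gt0 : 0 < enorm (y - x).
Proof. exact/enorm_gt0/Delta_plus_subr_gt0. Qed.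

Lemma direction_gt0 i : 0 < direction x y 0 i.
Proof.
by rewrite mxE mulr_gt0 ?invr_gt0 ?Delta_plus_enorm_gt0 ?Delta_plus_subr_gt0.
Qed.

Lemma enorm_direction : enorm (direction x y) = 1.
Proof.
have n_gt0 := Delta_plus_enorm_gt0.
by rewrite enormZ gtr0_norm ?invr_gt0 // mulVf // gt_eqF.
Qed.

Lemma subr_direction : y - x = enorm (y - x) *: direction x y.
Proof. by rewrite scalerA mulfV ?scale1r // gt_eqF // Delta_plus_enorm_gt0. Qed.

End DeltaPlus.
End Lines.

Theorem proposition2p2 (R : realType) (k : nat) (hk : (1 <= k)%N)
  (x y : 'rV[R]_k) :
  in_Delta_plus x y ->
  exists! lb : 'rV[R]_k * 'rV[R]_k,
    admissible lb.1 lb.2 /\ in_pi lb.1 lb.2 x y.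
Proof.
move=> xy; have d_gt0 := direction_gt0 hk xy.
have sd_neq0 := lt0r_neq0 (sumr_ord_gt0 hk d_gt0).
exists (direction x y, proj_sum0 x (direction x y)); split=> [|[l b] /=].
  split; first split => /=.
  - exact: (enorm_direction hk xy).
  - by split; last exact: sum_proj_sum0 sd_neq0.
  - exact: in_pi_translate (Delta_plus_enorm_gt0 hk xy) (subr_direction hk xy).
move=> [[l1 [l_gt0 sb0]] [s [t [st [xE yE]]]]].
have lE : l = direction x y.
  by rewrite xE yE; apply: unit_direction l1 _ (line_subr _ _ _ _); rewrite subr_gt0.
by rewrite -lE xE proj_sum0_line // lt0r_neq0 // sumr_ord_gt0.
Qed.
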